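(* Let $H$ be a bialgebra over a commutative ring $\Bbbk$ and $A$ a left $H$-module algebra. Then the maps $\Phi:H^{\otimes n}\to\mathrm{Hom}_\Bbbk(A^{\otimes n},A)$, $\Phi(h_1\otimes\dots\otimes h_n)(a_1\otimes\dots\otimes a_n)=(h_1.a_1)\cdots(h_n.a_n)$, define a morphism of linear operads with multiplication from the operad $\mathcal{O}_H$ (whose cochain complex is the cobar construction $\Omega H$) to the endomorphism operad $\mathcal{E}nd(A)$. In particular $\Phi$ induces a morphism of Gerstenhaber algebras $H^*(\Phi):\mathrm{Cotor}^*_H(\Bbbk,\Bbbk)\to HH^*(A,A)$.
   Context: A left $H$-module algebra is an algebra $A$ with a left $H$-module structure such that $h.(ab)=(h^{(1)}.a)(h^{(2).}b)$ and $h.1_A=\varepsilon(h)1_A$. $\mathcal{O}_H(n)=H^{\otimes n}$ with $(a_1\otimes\dots\otimes a_m)\circ_i(b_1\otimes\dots\otimes b_n)=a_1\otimes\dots\otimes a_{i-1}\otimes a_i^{(1)}b_1\otimes\dots\otimes a_i^{(n)}b_n\otimes a_{i+1}\otimes\dots\otimes a_m$ (with $\Delta^{n-1}(a_i)=a_i^{(1)}\otimes\dots\otimes a_i^{(n)}$), identity $1_H$, multiplication $1_H\otimes1_H$, $e=1\in\Bbbk$. $\mathcal{E}nd(A)(n)=\mathrm{Hom}(A^{\otimes n},A)$ with $\gamma(f;g_1,\dots,g_n)=f\circ(g_1\otimes\dots\otimes g_n)$, identity $\mathrm{id}_A$, multiplication the product of $A$, $e$ the unit $\Bbbk\to A$.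 For an operad with multiplication $(O,\mu,e)$, the cohomology of the cochain complex ($df=\mu\circ_2f+\sum_i(-1)^if\circ_i\mu+(-1)^{n+1}\mu\circ_1f$) is a Gerstenhaber algebra with cup product $(\mu\circ_1f)\circ_{m+1}g$ and bracket $\{f,g\}=f\bar\circ g-(-1)^{(m-1)(n-1)}g\bar\circ f$, $f\bar\circ g=(-1)^{(m-1)(n-1)}\sum_i(-1)^{(n-1)(i-1)}f\circ_ig$; for $\mathcal{O}_H$ this gives $\mathrm{Cotor}^*_H(\Bbbk,\Bbbk)$ and for $\mathcal{E}nd(A)$ it gives $HH^*(A,A)$. *)

From HB Require Import structures.
From mathcomp Require Import all_boot all_order all_algebra.
Set Implicit Arguments. Unset Strict Implicit. Unset Printing Implicit Defensive.
Import Order.TTheory GRing.Theory Num.Theory.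
Local Open Scope ring_scope.

Section Defs.
Variable R : comPzRingType.

(* An element sum_x r_x (v_x1 (x) ... (x) v_xn) of V^{(x)n} is represented by
   the formal sum [:: (r_x, [:: v_x1; ...; v_xn]) ; ...].                   *)
Definition fs (V : Type) := seq (R * seq V).

Definition wf (V : Type) (n : nat) (s : fs V) : bool :=
  all (fun x => size x.2 == n) s.

Definition fscale (V : Type) (c : R) (s : fs V) : fs V :=
  [seq (c * x.1, x.2) | x <- s].

Definition multilin (V M : lmodType R) (n : nat) (f : seq V -> M) : Prop :=
  forall (u : seq V) (j : nat) (c : R) (x y : V), size u = n -> (j < n)%N ->
    f (set_nth 0 u j (c *: x + y)) = c *: f (set_nth 0 u j x) + f (set_nth 0 u j y).

Definition evalfs (V M : lmodType R) (f : seq V -> M) (s : fs V) : M :=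
  \sum_(x <- s) x.1 *: f x.2.

(* equality in the tensor power V^{(x)n} over R: by the universal property,
   two formal sums define the same tensor iff every n-multilinear map into
   every R-module takes the same value on them. *)
Definition teq (V : lmodType R) (n : nat) (s t : fs V) : Prop :=
  forall (M : lmodType R) (f : seq V -> M), multilin n f ->
    evalfs f s = evalfs f t.

Definition is_bialgebra (H : algType R) (Delta : H -> fs H) (eps : H -> R) : Prop :=
  [/\ (forall h, wf 2 (Delta h)),
      (forall c g h, teq 2 (Delta (c *: g + h)) (fscale c (Delta g) ++ Delta h)),
      (forall c g h, eps (c *: g + h) = c * eps g + eps h) &
   [/\
      (* coassociativity (Delta (x) id) Delta = (id (x) Delta) Delta *)
      (forall h, teq 3
         (flatten [seq [seq (x.1 * y.1, y.2 ++ [:: nth 0 x.2 1])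
                        | y <- Delta (nth 0 x.2 0)] | x <- Delta h])
         (flatten [seq [seq (x.1 * y.1, nth 0 x.2 0 :: y.2)
                        | y <- Delta (nth 0 x.2 1)] | x <- Delta h])),
      (* counit: (eps (x) id) Delta = id = (id (x) eps) Delta *)
      (forall h, teq 1 [seq (x.1 * eps (nth 0 x.2 0), [:: nth 0 x.2 1]) | x <- Delta h]
                       [:: (1, [:: h])]
              /\ teq 1 [seq (x.1 * eps (nth 0 x.2 1), [:: nth 0 x.2 0]) | x <- Delta h]
                       [:: (1, [:: h])]),
      (* Delta and eps are unital algebra maps *)
      (forall g h, teq 2 (Delta (g * h))
         [seq (x.1 * y.1, [:: nth 0 x.2 0 * nth 0 y.2 0; nth 0 x.2 1 * nth 0 y.2 1])
         | x <- Delta g, y <- Delta h])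
      & [/\ teq 2 (Delta 1) [:: (1, [:: 1; 1])],
            (forall g h, eps (g * h) = eps g * eps h) & eps 1 = 1]]].

Definition is_module_algebra (H A : algType R) (Delta : H -> fs H) (eps : H -> R)
    (act : H -> A -> A) : Prop :=
  [/\ (forall c g h a, act (c *: g + h) a = c *: act g a + act h a),
      (forall c h a b, act h (c *: a + b) = c *: act h a + act h b),
      (forall g h a, act (g * h) a = act g (act h a)),
      (forall a, act 1 a = a) &
   [/\ (forall h a b, act h (a * b) =
         \sum_(x <- Delta h) x.1 *: (act (nth 0 x.2 0) a * act (nth 0 x.2 1) b))
      & (forall h, act h 1 = eps h *: 1)]].

(* comp m n i f g = f o_i g, for f of arity m and g of arity n, 1 <= i <= m *)
Section Generic.
Variables (X : Type) (comp : nat -> nat -> nat -> X -> X -> X)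
  (add : X -> X -> X) (scl : R -> X -> X) (zero : X) (mu : X).

Definition sgnz (z : int) : R := (-1) ^+ `|z|%N.

Definition gsum (F : nat -> X) (l : seq nat) : X :=
  foldr (fun i acc => add (F i) acc) zero l.

Definition op_d (n : nat) (f : X) : X :=
  add (comp 2 n 2 mu f)
      (add (gsum (fun i => scl (sgnz i%:Z) (comp n 2 i f mu)) (iota 1 n))
           (scl (sgnz n.+1%:Z) (comp 2 n 1 mu f))).

Definition op_cup (m n : nat) (f g : X) : X :=
  comp m.+1 n m.+1 (comp 2 m 1 mu f) g.

Definition op_circ (m n : nat) (f g : X) : X :=
  scl (sgnz ((m%:Z - 1) * (n%:Z - 1)))
      (gsum (fun i => scl (sgnz ((n%:Z - 1) * (i%:Z - 1))) (comp m n i f g))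
            (iota 1 m)).

Definition op_bracket (m n : nat) (f g : X) : X :=
  add (op_circ m n f g)
      (scl (- sgnz ((m%:Z - 1) * (n%:Z - 1))) (op_circ n m g f)).
End Generic.

Section OH.
Variables (H : algType R) (Delta : H -> fs H) (eps : H -> R).

(* iterated coproduct Delta^(n-1) : H -> H^{(x)n}; Delta^(-1) = eps *)
Fixpoint Deltan (n : nat) (h : H) : fs H :=
  match n with
  | 0 => [:: (eps h, [::])]
  | 1 => [:: (1, [:: h])]
  | S ((S _) as k) =>
      flatten [seq [seq (x.1 * y.1, nth 0 x.2 0 :: y.2)
                   | y <- Deltan k (nth 0 x.2 1)] | x <- Delta h]
  end.

(* (a_1..a_m) o_i (b_1..b_n) = a_1..a_(i-1) (a_i^(1) b_1) .. (a_i^(n) b_n) a_(i+1)..a_m,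
   extended bilinearly *)
Definition compH (m n i : nat) (s t : fs H) : fs H :=
  flatten [seq [seq (x.1 * y.1 * z.1,
                     take i.-1 x.2 ++ [seq p.1 * p.2 | p <- zip z.2 y.2] ++ drop i x.2)
               | z <- Deltan n (nth 0 x.2 i.-1)]
          | x <- s, y <- t].

Definition muH : fs H := [:: (1, [:: 1; 1])].
Definition idH : fs H := [:: (1, [:: 1])].
Definition eH : fs H := [:: (1, [::])].

Definition dH := op_d compH (@cat _) (@fscale H) [::] muH.
Definition cupH := op_cup compH muH.
Definition bracketH := op_bracket compH (@cat _) (@fscale H) [::].
End OH.

(* Hom(A^{(x)n}, A) is represented by (multilinear) maps seq A -> A, read on
   argument lists of length n. *)
Section EndA.
Variable A : algType R.

Definition compE (m n i : nat) (f g : seq A -> A) : seq A -> A :=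
  fun a => f (take i.-1 a ++ g (take n (drop i.-1 a)) :: drop (i.-1 + n) a).

Definition addE (f g : seq A -> A) : seq A -> A := fun a => f a + g a.
Definition sclE (c : R) (f : seq A -> A) : seq A -> A := fun a => c *: f a.
Definition zeroE : seq A -> A := fun _ => 0.
Definition muE : seq A -> A := fun a => nth 0 a 0 * nth 0 a 1.

Definition dE := op_d compE addE sclE zeroE muE.
Definition cupE := op_cup compE muE.
Definition bracketE := op_bracket compE addE sclE zeroE.
End EndA.

Definition Phi (H A : algType R) (act : H -> A -> A) (n : nat) (s : fs H) : seq A -> A :=
  fun a => \sum_(x <- s) x.1 *: \prod_(j < n) act (nth 0 x.2 j) (nth 0 a j).

End Defs.

From HB Require Import structures.
From mathcomp Require Import all_boot all_order all_algebra.
From mathcomp Require Import zify.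
Import GRing.Theory.
Local Open Scope ring_scope.

(* Iterating the module-algebra axiom gives
   h.(c_1 ... c_n) = sum h^(1).c_1 ... h^(n).c_n, the sum running over the
   iterated coproduct Delta^(n-1) h.  Applied to h = x_i and c_j = y_j.a_j it
   turns (Phi x o_i Phi y)(a) into the value of Phi on x o_i y, which is the
   operadic composition of O_H.  Everything else is formal: Phi is linear,
   sends the unit, the multiplication and e of O_H to those of End(A), and
   the differential, cup product and bracket are built from these by partial
   compositions and linear combinations. *)

Lemma wf_size {R : comPzRingType} {V : eqType} {n} {s : fs R V} {x} :
  wf n s -> x \in s -> size x.2 = n.
Proof. by move=> /allP h /h /eqP. Qed.

Lemma prod_set_nth {R : comPzRingType} {V : lmodType R} {B : algType R}
    (F : nat -> V -> B) {n} u j v :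
  (j < n)%N ->
  \prod_(k < n) F k (nth 0 (set_nth 0 u j v) k) =
  \prod_(0 <= k < j) F k (nth 0 u k) * F j v * \prod_(j.+1 <= k < n) F k (nth 0 u k).
Proof.
move=> ltjn; rewrite -(big_mkord xpredT (fun k => F k (nth 0 (set_nth 0 u j v) k))).
rewrite (@big_cat_nat _ _ _ j) /= ?(ltnW ltjn) // (big_ltn ltjn) mulrA.
rewrite nth_set_nth /= eqxx.
congr (_ * _ * _); apply: eq_big_nat => k /andP[lejk ltkn];
  by rewrite nth_set_nth /= ifN // neq_ltn ?ltkn ?lejk ?orbT.
Qed.

Lemma prod_set_nth_linear {R : comPzRingType} {V : lmodType R} {B : algType R}
    (F : nat -> V -> B) {n u j c x y} :
  (forall k c x y, F k (c *: x + y) = c *: F k x + F k y) -> (j < n)%N ->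
  \prod_(k < n) F k (nth 0 (set_nth 0 u j (c *: x + y)) k) =
  c *: \prod_(k < n) F k (nth 0 (set_nth 0 u j x) k)
  + \prod_(k < n) F k (nth 0 (set_nth 0 u j y) k).
Proof.
move=> F_linear ltjn; rewrite !prod_set_nth // F_linear mulrDr mulrDl.
by rewrite -scalerAr -scalerAl.
Qed.

Lemma prod_ord_zip {U V : nmodType} {B : pzSemiRingType} (F : U -> V -> B) {n l a} :
  size l = n -> size a = n ->
  \prod_(j < n) F (nth 0 l j) (nth 0 a j) = \prod_(p <- zip l a) F p.1 p.2.
Proof.
elim: l n a => [|h l IHl] n [|b a] //= <-; rewrite ?big_ord0 ?big_nil //.
by move=> [size_a]; rewrite big_ord_recl big_cons IHl.
Qed.

Section ModuleAlgebra.
Variables (R : comPzRingType) (H A : algType R).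
Variables (Delta : H -> fs R H) (eps : H -> R) (act : H -> A -> A).
Hypothesis actDl : forall c g h a, act (c *: g + h) a = c *: act g a + act h a.
Hypothesis actDr : forall c h a b, act h (c *: a + b) = c *: act h a + act h b.
Hypothesis actM : forall g h a, act (g * h) a = act g (act h a).
Hypothesis act1 : forall a, act 1 a = a.
Hypothesis act_mul : forall h a b, act h (a * b) =
  \sum_(x <- Delta h) x.1 *: (act (nth 0 x.2 0) a * act (nth 0 x.2 1) b).
Hypothesis act_unit : forall h, act h 1 = eps h *: 1.

Local Notation Deltan := (Deltan Delta eps).
Local Notation compH := (compH Delta eps).
Local Notation Phi := (Phi act).

Lemma act0 h : act h 0 = 0.
Proof.
have := actDr (-1) h 0 0.
by rewrite scaler0 addr0 scaleN1r addNr.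
Qed.

Lemma act_sum (I : Type) h (s : seq I) (c : I -> R) (G : I -> A) :
  act h (\sum_(x <- s) c x *: G x) = \sum_(x <- s) c x *: act h (G x).
Proof.
elim: s => [|x s IHs]; first by rewrite !big_nil act0.
by rewrite !big_cons actDr IHs.
Qed.

Lemma size_Deltan {n h z} : z \in Deltan n h -> size z.2 = n.
Proof.
elim: n h z => [|[|n] IHn] h z /=; rewrite ?inE; [by move/eqP-> | by move/eqP-> |].
by case/flatten_mapP => x _ /mapP[y Dy ->] /=; rewrite (IHn _ _ Dy).
Qed.

Lemma act_prod h (cs : seq A) :
  act h (\prod_(c <- cs) c) =
  \sum_(z <- Deltan (size cs) h) z.1 *: \prod_(p <- zip z.2 cs) act p.1 p.2.
Proof.
elim: cs h => [|c [|c' cs] IHcs] h.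
- by rewrite big_nil act_unit /= !big_cons !big_nil addr0.
- by rewrite /= !big_cons !big_nil mulr1 addr0 scale1r mulr1.
rewrite big_cons act_mul [Deltan _ _]/= big_flatten big_map /=.
apply: eq_bigr => x _; rewrite IHcs mulr_sumr scaler_sumr big_map.
by apply: eq_bigr => y _ /=; rewrite big_cons /= -scalerAr scalerA.
Qed.

Lemma prod_zip_actM (z y : seq H) (a : seq A) :
  \prod_(p <- zip z [seq act q.1 q.2 | q <- zip y a]) act p.1 p.2 =
  \prod_(p <- zip [seq q.1 * q.2 | q <- zip z y] a) act p.1 p.2.
Proof.
elim: z y a => [|h z IHz] [|g y] [|b a] //=.
by rewrite !big_cons /= actM IHz.
Qed.

Lemma act_prod_act {n} h {y : seq H} {a : seq A} : size y = n -> size a = n ->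
  act h (\prod_(j < n) act y`_j a`_j) =
  \sum_(z <- Deltan n h)
     z.1 *: \prod_(p <- zip [seq p.1 * p.2 | p <- zip z.2 y] a) act p.1 p.2.
Proof.
move=> size_y size_a; rewrite (prod_ord_zip act size_y size_a).
rewrite -(big_map (fun q => act q.1 q.2) xpredT id) act_prod.
rewrite size_map size_zip size_y size_a minnn.
by apply: eq_bigr => z _; rewrite prod_zip_actM.
Qed.

Lemma act_Phi {n} h {t a} : wf n t -> size a = n ->
  act h (Phi n t a) = \sum_(y <- t) \sum_(z <- Deltan n h)
     (y.1 * z.1) *: \prod_(p <- zip [seq q.1 * q.2 | q <- zip z.2 y.2] a) act p.1 p.2.
Proof.
move=> wf_t size_a; rewrite /Phi act_sum big_seq [RHS]big_seq.
apply: eq_bigr => y yt; rewrite (act_prod_act _ (wf_size wf_t yt) size_a) scaler_sumr.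
by apply: eq_bigr => z _; rewrite scalerA.
Qed.

Lemma Phi_cat n s t a : Phi n (s ++ t) a = Phi n s a + Phi n t a.
Proof. by rewrite /Phi big_cat. Qed.

Lemma Phi_fscale n c s a : Phi n (fscale c s) a = c *: Phi n s a.
Proof.
rewrite /Phi /fscale big_map scaler_sumr.
by apply: eq_bigr => x _ /=; rewrite scalerA.
Qed.

Lemma Phi_gsum k (G : nat -> fs R H) (F : nat -> seq A -> A) l a :
  (forall i, i \in l -> Phi k (G i) a = F i a) ->
  Phi k (gsum (@cat _) [::] G l) a = gsum (@addE R A) (@zeroE R A) F l a.
Proof.
elim: l => [|j l IHl] PhiG /=; first by rewrite /Phi big_nil.
rewrite Phi_cat PhiG ?mem_head // IHl // => i il.
by apply: PhiG; rewrite inE il orbT.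
Qed.

Lemma Phi_teq n s t a : teq n s t -> Phi n s a = Phi n t a.
Proof.
move=> eq_st; apply: (eq_st A (fun l => \prod_(j < n) act l`_j a`_j)).
move=> u j c x y _ ltjn.
exact: (prod_set_nth_linear (fun k h => act h a`_k) (fun k c x y => actDl c x y a`_k)).
Qed.

Lemma Phi_multilin n s : multilin n (Phi n s).
Proof.
move=> u j c x y _ ltjn; rewrite /Phi.
under eq_bigr => w _ do
  rewrite (prod_set_nth_linear (fun k => act w.2`_k) (fun k c => actDr c w.2`_k)) //.
rewrite scaler_sumr -big_split /=; apply: eq_bigr => w _.
by rewrite scalerDr !scalerA mulrC.
Qed.

Lemma Phi_idH a : Phi 1 (idH H) a = a`_0.
Proof. by rewrite /Phi big_seq1 scale1r big_ord1 act1. Qed.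

Lemma Phi_muH a : Phi 2 (muH H) a = muE a.
Proof. by rewrite /Phi big_seq1 scale1r !big_ord_recl big_ord0 !act1 mulr1. Qed.

Lemma Phi_eH : Phi 0 (eH H) [::] = 1.
Proof. by rewrite /Phi big_seq1 scale1r big_ord0. Qed.

Lemma wf_compH {m n} i {s t} : wf m s -> wf n t -> (1 <= i <= m)%N ->
  wf (m + n).-1 (compH m n i s t).
Proof.
move=> wf_s wf_t /andP[]; case: i => [//|i] _ ltim.
apply/allP => w /flattenP[r /allpairsP[[x y] [xs yt ->]]] /mapP[z Dz ->] /=.
rewrite !size_cat size_map size_zip (size_Deltan Dz) (wf_size wf_t yt) minnn.
by rewrite size_take size_drop (wf_size wf_s xs) ltim; apply/eqP; lia.
Qed.

Lemma Phi_compH {m n} i {s t} k a : wf m s -> wf n t -> (1 <= i <= m)%N ->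
  k = (m + n).-1 -> size a = k ->
  Phi k (compH m n i s t) a = compE m n i (Phi m s) (Phi n t) a.
Proof.
move=> wf_s wf_t /andP[]; case: i => [//|i] _ ltim -> size_a.
set a1 := take i a; set a2 := take n (drop i a); set a3 := drop (i + n) a.
have def_a : a = a1 ++ a2 ++ a3 by rewrite /a1 /a2 /a3 addnC -drop_drop !cat_take_drop.
have size_a1 : size a1 = i by rewrite size_take; case: ltnP; lia.
have size_a2 : size a2 = n by rewrite size_take size_drop; case: ltnP; lia.
rewrite /compE /= -/a1 -/a2 -/a3 {1 2}/Phi big_flatten big_allpairs_dep /=.
rewrite big_seq [RHS]big_seq; apply: eq_bigr => x xs.
have size_x : size x.2 = m := wf_size wf_s xs.
have size_b : size (a1 ++ Phi n t a2 :: a3) = m.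
  by rewrite size_cat /= size_a1 size_drop size_a; lia.
have def_x : x.2 = take i x.2 ++ x.2`_i :: drop i.+1 x.2.
  by rewrite -drop_nth ?cat_take_drop ?size_x.
have size_xi : size (take i x.2) = size a1 by rewrite size_take size_x ltim size_a1.
rewrite (prod_ord_zip act size_x size_b) [in RHS]def_x zip_cat // big_cat big_cons /=.
rewrite (act_Phi _ wf_t size_a2) mulr_suml mulr_sumr scaler_sumr.
rewrite big_seq [RHS]big_seq; apply: eq_bigr => y yt.
rewrite big_map mulr_suml mulr_sumr scaler_sumr big_seq [RHS]big_seq.
apply: eq_bigr => z Dz /=.
rewrite -scalerAl -scalerAr !scalerA !mulrA; congr (_ *: _).
have size_yz : size [seq p.1 * p.2 | p <- zip z.2 y.2] = size a2.
  by rewrite size_map size_zip (size_Deltan Dz) (wf_size wf_t yt) minnn size_a2.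
rewrite (prod_ord_zip act _ size_a); last first.
  by rewrite !size_cat size_yz size_a2 size_take size_drop size_x ltim; lia.
by rewrite {1}def_a !zip_cat // !big_cat /= mulrA.
Qed.

Lemma Phi_dH n f a : wf n f -> size a = n.+1 ->
  Phi n.+1 (dH Delta eps n f) a = dE n (Phi n f) a.
Proof.
move=> wf_f size_a.
have wf_muH : wf 2 (muH H) by [].
rewrite /dH /dE /op_d !Phi_cat Phi_fscale /addE /sclE.
rewrite !(Phi_compH _ _ _ wf_muH wf_f) // /compE !Phi_muH; congr (_ + (_ + _)).
apply: Phi_gsum => i; rewrite mem_iota => lt_i.
by rewrite Phi_fscale (Phi_compH _ _ _ wf_f wf_muH) ?addn2 // /compE Phi_muH addn2.
Qed.

Lemma Phi_cupH m n f g a : wf m f -> wf n g -> size a = (m + n)%N ->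
  Phi (m + n) (cupH Delta eps m n f g) a = cupE m n (Phi m f) (Phi n g) a.
Proof.
move=> wf_f wf_g size_a; have wf_muH : wf 2 (muH H) by [].
rewrite /cupH /cupE /op_cup.
rewrite (Phi_compH _ _ _ (wf_compH _ wf_muH wf_f _) wf_g) //= /compE.
set b := (X in Phi m.+1 _ X).
have size_b : size b = m.+1.
  by rewrite /b size_cat /= size_take size_drop size_a; case: ltnP; lia.
by rewrite (Phi_compH _ _ _ wf_muH wf_f) // /compE Phi_muH.
Qed.

Lemma Phi_bracketH m n f g a : wf m f -> wf n g -> size a = (m + n).-1 ->
  Phi (m + n).-1 (bracketH Delta eps m n f g) a
  = bracketE m n (Phi m f) (Phi n g) a.
Proof.
move=> wf_f wf_g size_a.
rewrite /bracketH /bracketE /op_bracket /op_circ Phi_cat !Phi_fscale /addE /sclE.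
congr (_ *: _ + _ *: (_ *: _)); apply: Phi_gsum => i; rewrite mem_iota => lt_i.
  by rewrite Phi_fscale Phi_compH.
by rewrite Phi_fscale Phi_compH // addnC.
Qed.

End ModuleAlgebra.

Theorem lemma7p1 (R : comPzRingType) (H A : algType R)
    (Delta : H -> fs R H) (eps : H -> R) (act : H -> A -> A) :
  is_bialgebra Delta eps ->
  is_module_algebra Delta eps act ->
  (* Phi_n : H^{(x)n} -> Hom(A^{(x)n}, A) is well defined and R-linear, and
     lands in multilinear maps *)
  [/\ (forall n (s t : fs R H), wf n s -> wf n t -> teq n s t ->
         forall a : seq A, size a = n -> Phi act n s a = Phi act n t a),
      (forall n (s t : fs R H) (a : seq A),
         Phi act n (s ++ t) a = Phi act n s a + Phi act n t a),
      (forall n c (s : fs R H) (a : seq A),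
         Phi act n (fscale c s) a = c *: Phi act n s a),
      (forall n (s : fs R H), wf n s -> multilin n (Phi act n s))
    (* morphism of operads with multiplication: identity, multiplication,
       e, and partial compositions are preserved *)
    & [/\ (forall a : seq A, size a = 1%N -> Phi act 1 (idH H) a = nth 0 a 0),
          (forall a : seq A, size a = 2%N -> Phi act 2 (muH H) a = muE a),
          Phi act 0 (eH H) [::] = 1,
          (forall m n i (s t : fs R H), wf m s -> wf n t -> (1 <= i <= m)%N ->
             forall a : seq A, size a = (m + n).-1 ->
               Phi act (m + n).-1 (compH Delta eps m n i s t) a
               = compE m n i (Phi act m s) (Phi act n t) a)
        (* consequently, at the cochain level, Phi commutes with the
           differentials, the cup products and the Gerstenhaber brackets, so
           it induces a morphism of Gerstenhaber algebras
           Cotor_H(k,k) -> HH(A,A) *)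
        & [/\ (forall n (f : fs R H), wf n f ->
                 forall a : seq A, size a = n.+1 ->
                   Phi act n.+1 (dH Delta eps n f) a = dE n (Phi act n f) a),
              (forall m n (f g : fs R H), wf m f -> wf n g ->
                 forall a : seq A, size a = (m + n)%N ->
                   Phi act (m + n) (cupH Delta eps m n f g) a
                   = cupE m n (Phi act m f) (Phi act n g) a)
            & (forall m n (f g : fs R H), wf m f -> wf n g ->
                 forall a : seq A, size a = (m + n).-1 ->
                   Phi act (m + n).-1 (bracketH Delta eps m n f g) a
                   = bracketE m n (Phi act m f) (Phi act n g) a)]]].
Proof.
move=> _ [actDl actDr actM act1 [act_mul act_unit]].
split; [ | exact: Phi_cat | exact: Phi_fscale | | split; [ | | | | split]].
- by move=> n s t _ _ eq_st a _; apply: Phi_teq.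
- by move=> n s _; apply: Phi_multilin.
- by move=> a _; apply: Phi_idH.
- by move=> a _; apply: Phi_muH.
- exact: Phi_eH.
- by move=> m n i s t wf_s wf_t lt_i a; apply: Phi_compH.
- by move=> n f wf_f a; apply: Phi_dH.
- by move=> m n f g wf_f wf_g a; apply: Phi_cupH.
- by move=> m n f g wf_f wf_g a; apply: Phi_bracketH.
Qed.
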